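(* Let $N\ge1$, $h,\varepsilon\in(0,1)$, and let $\Phi$ be the opinion operator defined in the context. Let $P=(p_1,\dots,p_N)\in[-1,1]^N$ with $p_1\le\dots\le p_N$ be a fixed point of $\Phi$ that is not basic, i.e. not of the form $(-1,\dots,-1,1,\dots,1)$ (all entries in $\{-1,1\}$, allowing either block to be empty). Then either (i) every $p_k\in\{-1,0,1\}$, i.e. $P=(-1,\dots,-1,0,\dots,0,1,\dots,1)$; or (ii) there are indices $1\le a\le l<b\le m\le N$ such that $p_k=-1$ for $k<a$; $-\varepsilon<p_k<0$ for $a\le k\le l$; $p_k=0$ for $l<k<b$; $0<p_k<\varepsilon$ for $b\le k\le m$; $p_k=1$ for $k>m$; moreover $J(p_k)=\{a,a+1,\dots,m\}$ for every $k\in\{a,\dots,m\}$, and $p_a+p_{a+1}+\dots+p_m=0$.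
   Context: For $V=(v_1,\dots,v_N)\in[-1,1]^N$ and each $k$, let $J(v_k)=\{l\in\{1,\dots,N\}:|v_l-v_k|\le\varepsilon\}$ (computed within the array $V$) and $I(v_k)=|J(v_k)|$. Put $w_k(V)=v_k+\frac{h}{I(v_k)}\sum_{l\in J(v_k)}v_l$. Then $\Phi(V)=(v_1',\dots,v_N')$ where $v_k'=-1$ if $w_k<-1$, $v_k'=1$ if $w_k>1$, and $v_k'=w_k$ if $|w_k|\le1$. *)

From HB Require Import structures.
From mathcomp Require Import all_boot all_order all_algebra.
Set Implicit Arguments. Unset Strict Implicit. Unset Printing Implicit Defensive.
Import Order.TTheory GRing.Theory Num.Theory.
Local Open Scope ring_scope.

(* Opinion vectors V = (v_1,...,v_N) are functions 'I_N -> R (0-based indices). *)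

Definition Jset (R : realFieldType) (N : nat) (eps : R) (V : 'I_N -> R) (k : 'I_N)
  : {set 'I_N} := [set l : 'I_N | `|V l - V k| <= eps].

Definition Icard (R : realFieldType) (N : nat) (eps : R) (V : 'I_N -> R) (k : 'I_N)
  : nat := #|Jset eps V k|.

Definition wk (R : realFieldType) (N : nat) (h eps : R) (V : 'I_N -> R) (k : 'I_N) : R :=
  V k + h / (Icard eps V k)%:R * \sum_(l in Jset eps V k) V l.

Definition Phi (R : realFieldType) (N : nat) (h eps : R) (V : 'I_N -> R) : 'I_N -> R :=
  fun k => let w := wk h eps V k in
    if w < -1 then -1 else if 1 < w then 1 else w.

From HB Require Import structures.
From mathcomp Require Import all_boot all_order all_algebra.
From mathcomp Require Import lra.
Set Implicit Arguments.
Unset Strict Implicit.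
Unset Printing Implicit Defensive.
Import Order.TTheory GRing.Theory Num.Theory.
Local Open Scope ring_scope.

(* An entry p_k of a fixed point strictly inside (-1, 1) is not truncated, so
   h / I(p_k) * sum_{l in J(p_k)} p_l = 0: every interior window sums to zero.
   Interior indices form an interval [a, z] by monotonicity; if some interior
   entry is nonzero, the zero-sum condition produces an entry of opposite sign
   within eps, whence p_a < 0 < p_z.
   Moving a window centre from c up to d with d - eps <= 0 <= c + eps only
   loses negative entries and gains positive ones, so the window sum strictly
   increases as soon as one entry enters or leaves.  Comparing the zero windows
   at p_a and at the largest entry <= p_a + eps gives p_z <= p_a + eps, and
   comparing those at p_a and p_z keeps every -1 and 1 farther than eps from
   the interior values.  Hence each interior window is exactly {a, ..., z}. *)

Lemma sum_eq0_has_pos (R : realDomainType) (I : finType) (p : pred I)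
    (F : I -> R) (k : I) :
  \sum_(i | p i) F i = 0 -> p k -> F k < 0 -> exists2 i, p i & 0 < F i.
Proof.
move=> sum0 pk Fk_lt0.
have [i /andP[pi Fi_gt0] | no_pos] := pickP (fun i => p i && (0 < F i)).
  by exists i.
have opp_ge0 i : p i -> 0 <= - F i.
  by move=> pi; rewrite oppr_ge0 leNgt; have /= := no_pos i; rewrite pi /= => ->.
have := psumr_eq0P opp_ge0; rewrite sumrN sum0 oppr0 => /(_ erefl k pk) /eqP.
by rewrite oppr_eq0 (negbTE (ltr0_neq0 Fk_lt0)).
Qed.

Lemma sum_eq0_has_neg (R : realDomainType) (I : finType) (p : pred I)
    (F : I -> R) (k : I) :
  \sum_(i | p i) F i = 0 -> p k -> 0 < F k -> exists2 i, p i & F i < 0.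
Proof.
move=> sum0 pk Fk_gt0.
have sumN0 : \sum_(i | p i) - F i = 0 by rewrite sumrN sum0 oppr0.
have oppFk_lt0 : - F k < 0 by rewrite oppr_lt0.
by have [i pi] := sum_eq0_has_pos sumN0 pk oppFk_lt0; rewrite oppr_gt0; exists i.
Qed.

Section WindowSum.
Variables (R : realDomainType) (I : finType) (eps : R) (x : I -> R).

Definition window_sum (c : R) : R := \sum_(i | `|x i - c| <= eps) x i.

Lemma window_sum_lt (c d : R) (i : I) :
  c <= d -> d - eps <= 0 <= c + eps ->
  (c - eps <= x i < d - eps) || (c + eps < x i <= d + eps) ->
  window_sum c < window_sum d.
Proof.
move=> le_cd /andP[d_low c_high] moved_i.
rewrite /window_sum !(big_mkcond (fun j => `|x j - _| <= eps)).
have le_term j : (if `|x j - c| <= eps then x j else 0)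
                 <= (if `|x j - d| <= eps then x j else 0).
  by do 2 case: ifPn; rewrite !ler_norml; lra.
rewrite (bigD1 i) // [X in _ < X](bigD1 i) //.
apply: ltr_leD; last by apply: ler_sum => j _; apply: le_term.
move: moved_i; do 2 case: ifPn; rewrite !ler_norml; lra.
Qed.

End WindowSum.

Lemma window_sum_Jset (R : realFieldType) (N : nat) (eps : R) (V : 'I_N -> R)
    (k : 'I_N) :
  window_sum eps V (V k) = \sum_(l in Jset eps V k) V l.
Proof. by apply: eq_bigl => l; rewrite inE. Qed.

Lemma Phi_fixed_Jset_sum (R : realFieldType) (N : nat) (h eps : R)
    (V : 'I_N -> R) (k : 'I_N) :
  h != 0 -> 0 <= eps -> Phi h eps V k = V k -> -1 < V k < 1 ->
  \sum_(l in Jset eps V k) V l = 0.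
Proof.
move=> h_neq0 eps_ge0 fixed_k /andP[Vk_gtN1 Vk_lt1].
have wk_fixed : wk h eps V k = V k.
  move: fixed_k; rewrite /Phi.
  by case: ifP => _; [lra | case: ifP => _; [lra | by []]].
have card_gt0 : (0 < Icard eps V k)%N.
  by apply/card_gt0P; exists k; rewrite inE subrr normr0.
move: wk_fixed; rewrite /wk -[RHS]addr0 => /addrI /eqP.
by rewrite !mulf_eq0 invr_eq0 pnatr_eq0 (negbTE h_neq0) eqn0Ngt card_gt0 => /eqP.
Qed.

Section FixedPoint.
Variables (R : realFieldType) (N : nat) (h eps : R) (P : 'I_N -> R).
Hypotheses (h_gt0 : 0 < h) (eps_gt0 : 0 < eps) (eps_lt1 : eps < 1).
Hypothesis P_bounded : forall k, -1 <= P k <= 1.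
Hypothesis P_mono : forall i j : 'I_N, (i <= j)%N -> P i <= P j.
Hypothesis P_fixed : forall k, Phi h eps P k = P k.

Definition interior (i : 'I_N) : bool := (-1 < P i) && (P i < 1).

Lemma not_interior i : ~~ interior i -> P i = -1 \/ P i = 1.
Proof.
rewrite /interior negb_and -!leNgt; have /andP[? ?] := P_bounded i.
by case/orP => ?; [left | right]; lra.
Qed.

Lemma window_sum_interior k : interior k -> window_sum eps P (P k) = 0.
Proof.
by move=> int_k; rewrite window_sum_Jset (Phi_fixed_Jset_sum (h := h)) ?gt_eqF ?ltW.
Qed.

Lemma interior_neg_has_pos_neighbour k : interior k -> P k < 0 ->
  exists2 l, 0 < P l & P l <= P k + eps.
Proof.
move=> int_k Pk_lt0.
have k_near : `|P k - P k| <= eps by rewrite subrr normr0 ltW.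
have [l] := sum_eq0_has_pos (window_sum_interior int_k) k_near Pk_lt0.
by rewrite ler_norml => /andP[_ ?] Pl_gt0; exists l => //; lra.
Qed.

Lemma interior_pos_has_neg_neighbour k : interior k -> 0 < P k ->
  exists2 l, P l < 0 & P k - eps <= P l.
Proof.
move=> int_k Pk_gt0.
have k_near : `|P k - P k| <= eps by rewrite subrr normr0 ltW.
have [l] := sum_eq0_has_neg (window_sum_interior int_k) k_near Pk_gt0.
by rewrite ler_norml => /andP[? _] Pl_lt0; exists l => //; lra.
Qed.

Section Extremes.
Variables a z : 'I_N.
Hypotheses (interior_a : interior a) (interior_z : interior z).
Hypothesis a_min : forall i, interior i -> (a <= i)%N.
Hypothesis z_max : forall i, interior i -> (i <= z)%N.
Hypothesis interior_nonzero : exists2 i, interior i & P i != 0.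

Lemma interior_range i : interior i -> P a <= P i <= P z.
Proof. by move=> int_i; rewrite !P_mono ?a_min ?z_max. Qed.

Lemma interiorE i : interior i = (a <= i <= z)%N.
Proof.
apply/idP/idP => [int_i | /andP[a_le_i i_le_z]]; first by rewrite a_min ?z_max.
have := P_mono a_le_i; have := P_mono i_le_z.
move: interior_a interior_z => /andP[? ?] /andP[? ?] ? ?.
by apply/andP; split; lra.
Qed.

Lemma extremes_sign : P a < 0 < P z.
Proof.
have [i int_i Pi_neq0] := interior_nonzero.
have /andP[? ?] := interior_range int_i; have ? := eps_lt1.
have [Pi_lt0 | Pi_gt0] : P i < 0 \/ 0 < P i by apply/orP; rewrite -neq_lt.
- have [l Pl_gt0 Pl_le] := interior_neg_has_pos_neighbour int_i Pi_lt0.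
  have int_l : interior l by apply/andP; split; lra.
  have /andP[? ?] := interior_range int_l.
  by apply/andP; split; lra.
- have [l Pl_lt0 Pl_ge] := interior_pos_has_neg_neighbour int_i Pi_gt0.
  have int_l : interior l by apply/andP; split; lra.
  have /andP[? ?] := interior_range int_l.
  by apply/andP; split; lra.
Qed.

Lemma extremes_close : P z <= P a + eps.
Proof.
rewrite leNgt; apply/negP => far.
have /andP[Pa_lt0 Pz_gt0] := extremes_sign; have ? := eps_lt1.
have [l Pl_gt0 Pl_le] := interior_neg_has_pos_neighbour interior_a Pa_lt0.
have [l' Pl'_lt0 Pl'_ge] := interior_pos_has_neg_neighbour interior_z Pz_gt0.
have near_a : P a <= P a + eps by rewrite lerDl ltW.
have [a' Pa'_le a'_max] := @arg_maxnP _ a (fun i => P i <= P a + eps) val near_a.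
have /= Pa_le : P a <= P a' by apply/P_mono/a'_max.
have /= Pl_le' : P l <= P a' by apply/P_mono/a'_max.
have int_a' : interior a' by apply/andP; split; lra.
have /andP[_ Pa'_le_z] := interior_range int_a'.
(* [z] enters the window between centres [P a] and [P a'],
   as [P z - eps <= P l' < 0 < P a']. *)
suff : window_sum eps P (P a) < window_sum eps P (P a').
  by rewrite !window_sum_interior // ltxx.
apply: (window_sum_lt (i := z)) => //; first by apply/andP; split; lra.
by apply/orP; right; apply/andP; split; lra.
Qed.

Lemma boundary_far i : ~~ interior i -> P i < P a - eps \/ P z + eps < P i.
Proof.
move=> not_int_i.
have /andP[Pa_lt0 Pz_gt0] := extremes_sign; have ? := extremes_close.
have ? := eps_lt1; have /andP[_ Pa_le_z] := interior_range interior_a.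
have i_stays : ~~ ((P a - eps <= P i < P z - eps) || (P a + eps < P i <= P z + eps)).
  apply/negP => i_moves.
  have : window_sum eps P (P a) < window_sum eps P (P z).
    by apply: window_sum_lt i_moves => //; apply/andP; split; lra.
  by rewrite !window_sum_interior // ltxx.
by case: (not_interior not_int_i) => Pi; rewrite Pi in i_stays *; [left | right]; lra.
Qed.

Lemma Jset_interior k : interior k -> Jset eps P k = [set i | interior i].
Proof.
move=> int_k; apply/setP => i; rewrite !inE ler_norml.
have /andP[? ?] := interior_range int_k; have ? := extremes_close.
have [int_i | not_int_i] := boolP (interior i).
- by have /andP[? ?] := interior_range int_i; apply/andP; split; lra.
- have far_i := boundary_far not_int_i.
  by apply/negbTE; rewrite negb_and -!ltNge; lra.
Qed.

Lemma interior_sum : \sum_(i : 'I_N | (a <= i <= z)%N) P i = 0.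
Proof.
rewrite -[RHS](window_sum_interior interior_a) window_sum_Jset Jset_interior //.
by apply: eq_bigl => i; rewrite inE interiorE.
Qed.

Lemma Jset_interval (k : 'I_N) : (a <= k <= z)%N ->
  Jset eps P k = [set i : 'I_N | (a <= i <= z)%N].
Proof.
by rewrite -interiorE => int_k; apply/setP => i; rewrite Jset_interior // !inE interiorE.
Qed.

Lemma before_interior (k : 'I_N) : (k < a)%N -> P k = -1.
Proof.
move=> k_lt_a; have not_int_k : ~~ interior k by rewrite interiorE leqNgt k_lt_a.
have := P_mono (ltnW k_lt_a); have /andP[_ ?] := interior_a.
by case: (not_interior not_int_k) => // ->; lra.
Qed.

Lemma after_interior (k : 'I_N) : (z < k)%N -> P k = 1.
Proof.
move=> z_lt_k; have not_int_k : ~~ interior k.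
  by rewrite interiorE negb_and orbC -ltnNge z_lt_k.
have := P_mono (ltnW z_lt_k); have /andP[? _] := interior_z.
by case: (not_interior not_int_k) => // ->; lra.
Qed.

Lemma fixed_point_shape : exists l b : 'I_N,
  [/\ (a <= l)%N, (l < b)%N & (b <= z)%N] /\
  (forall k : 'I_N, (k < a)%N -> P k = -1) /\
  (forall k : 'I_N, (a <= k <= l)%N -> - eps < P k /\ P k < 0) /\
  (forall k : 'I_N, (l < k)%N -> (k < b)%N -> P k = 0) /\
  (forall k : 'I_N, (b <= k <= z)%N -> 0 < P k /\ P k < eps) /\
  (forall k : 'I_N, (z < k)%N -> P k = 1) /\
  (forall k : 'I_N, (a <= k <= z)%N ->
     Jset eps P k = [set i : 'I_N | (a <= i <= z)%N]) /\
  \sum_(i : 'I_N | (a <= i <= z)%N) P i = 0.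
Proof.
have /andP[Pa_lt0 Pz_gt0] := extremes_sign; have ? := extremes_close.
have [l /= Pl_lt0 l_max] := @arg_maxnP _ a (fun i => P i < 0) val Pa_lt0.
have [b /= Pb_gt0 b_min] := @arg_minnP _ z (fun i => 0 < P i) val Pz_gt0.
exists l, b; split.
  split; [exact: l_max | | exact: b_min].
  by rewrite ltnNge; apply/negP => /P_mono; lra.
split; first exact: before_interior.
split; first by move=> k /andP[/P_mono ? /P_mono ?]; split; lra.
split.
  move=> k l_lt_k k_lt_b.
  case: (ltgtP (P k) 0) => [/l_max /= | /b_min /= | //].
  - by rewrite leqNgt l_lt_k.
  - by rewrite leqNgt k_lt_b.
split; first by move=> k /andP[/P_mono ? /P_mono ?]; split; lra.
split; first exact: after_interior.
by split; [exact: Jset_interval | exact: interior_sum].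
Qed.

End Extremes.
End FixedPoint.

Theorem theorem2 (R : realFieldType) (N : nat) (h eps : R) (P : 'I_N -> R) :
  (0 < N)%N ->
  0 < h -> h < 1 -> 0 < eps -> eps < 1 ->
  (forall k, -1 <= P k <= 1) ->
  (forall i j : 'I_N, (i <= j)%N -> P i <= P j) ->
  (forall k, Phi h eps P k = P k) ->
  ~ (exists c : nat, forall k : 'I_N, P k = if (k < c)%N then -1 else 1) ->
  (forall k, P k = -1 \/ P k = 0 \/ P k = 1)
  \/
  (exists a l b m : 'I_N,
     [/\ (a <= l)%N, (l < b)%N & (b <= m)%N] /\
     (forall k : 'I_N, (k < a)%N -> P k = -1) /\
     (forall k : 'I_N, (a <= k <= l)%N -> - eps < P k /\ P k < 0) /\
     (forall k : 'I_N, (l < k)%N -> (k < b)%N -> P k = 0) /\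
     (forall k : 'I_N, (b <= k <= m)%N -> 0 < P k /\ P k < eps) /\
     (forall k : 'I_N, (m < k)%N -> P k = 1) /\
     (forall k : 'I_N, (a <= k <= m)%N ->
        Jset eps P k = [set i : 'I_N | (a <= i <= m)%N]) /\
     \sum_(i : 'I_N | (a <= i <= m)%N) P i = 0).
Proof.
move=> _ h_gt0 _ eps_gt0 eps_lt1 P_bounded P_mono P_fixed _.
case: (pickP (fun i => interior P i && (P i != 0))) =>
  [i /andP[int_i Pi_neq0] | no_nonzero].
- have [a int_a a_min] := arg_minnP val int_i.
  have [z int_z z_max] := arg_maxnP val int_i.
  have [l [b shape]] := fixed_point_shape h_gt0 eps_gt0 eps_lt1 P_bounded P_mono
    P_fixed int_a int_z a_min z_max (ex_intro2 _ _ i int_i Pi_neq0).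
  by right; exists a, l, b, z.
- left => k; have [int_k | not_int_k] := boolP (interior P k).
  + by right; left; apply/eqP; move: (no_nonzero k); rewrite /= int_k => /negbFE.
  + by case: (not_interior P_bounded not_int_k) => ->; auto.
Qed.
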